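(* Let $U=\{(x,f(x)):x\in\mathbb{F}_{q^n}\}$ and $W=\{(x,g(x)):x\in\mathbb{F}_{q^n}\}$, where $f,g$ are $q$-polynomials (so these are $n$-dimensional $\mathbb{F}_q$-subspaces of $\mathbb{F}_{q^n}^2$ with $\langle(0,1)\rangle\notin L_U,L_W$), and let $A,B$ be the Dickson matrices of $f,g$. Then $L_U=L_W$ if and only if $A$ and $B$ have equal corresponding principal minors, i.e. $\det A[\alpha|\alpha]=\det B[\alpha|\alpha]$ for all nonempty $\alpha\subseteq\mathbb{Z}_n$.
   Context: $q$ a prime power, $n\ge2$; $L_U=\{\langle u\rangle_{\mathbb{F}_{q^n}}:u\in U\setminus\{0\}\}\subseteq\mathrm{PG}(1,q^n)$. A $q$-polynomial is $f(x)=\sum_{j=0}^{n-1}a_jx^{q^j}\in\mathbb{F}_{q^n}[x]$; its Dickson matrix is the $n\times n$ matrix $A$ indexed by $\mathbb{Z}_n$ with $A[i|j]=a_{j-i}^{q^i}$ (indices mod $n$). $A[\alpha|\beta]$ is the submatrix with rows in $\alpha$ and columns in $\beta$. *)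

From HB Require Import structures.
From mathcomp Require Import all_boot all_order all_algebra all_field.
Set Implicit Arguments. Unset Strict Implicit. Unset Printing Implicit Defensive.
Import GRing.Theory.
Local Open Scope ring_scope.

Definition qpoly_eval (L : finFieldType) (q n : nat) (a : 'I_n -> L) (x : L) : L :=
  \sum_(j < n) a j * x ^+ (q ^ j).

Definition ord_subn (n : nat) (j i : 'I_n) : 'I_n :=
  Ordinal (ltn_pmod (j + (n - i))%N (leq_ltn_trans (leq0n i) (ltn_ord i))).

Definition dickson_mx (L : finFieldType) (q n : nat) (a : 'I_n -> L) : 'M[L]_n :=
  \matrix_(i < n, j < n) (a (ord_subn j i)) ^+ (q ^ i).

Definition principal_submx (R : Type) (n : nat) (A : 'M[R]_n) (alpha : {set 'I_n})
  : 'M[R]_#|alpha| :=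
  mxsub (fun k : 'I_#|alpha| => enum_val k) (fun k : 'I_#|alpha| => enum_val k) A.

Definition graph_set (L : finFieldType) (f : L -> L) : {set L * L} :=
  [set (x, f x) | x : L].

Definition proj_point (L : finFieldType) (u : L * L) : {set L * L} :=
  [set (c * u.1, c * u.2) | c : L].

Definition linset (L : finFieldType) (U : {set L * L}) : {set {set L * L}} :=
  [set proj_point u | u in U :\ (0, 0)].

(* The set L_U of the graph of a q-polynomial f is {<(1, l)> : l in S_f}, where
   S_f = {f x / x : x <> 0} is the set of l such that f - l x has a nonzero
   root, i.e. such that the Dickson matrix of f - l x is singular.  Hence S_f
   is the root set of P_f(X) = det (A - diag (X, X^q, ..., X^(q^(n-1)))).
   Expanding, P_f = sum_J (-1)^|~J| det A[J|J] X^(sum_(i notin J) q^i), and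
   the exponents are pairwise distinct, so P_f = P_g iff A and B have the same
   principal minors.  Conversely, Dickson determinants are fixed by x |-> x^q,
   so P_f(l)^(q-1) is 0 or 1 according as l is in S_f or not: if S_f = S_g,
   then P_f^(q-1) and P_g^(q-1) agree on L and have degree q^n - 1 < |L|, so
   they are equal; as P_f and P_g have the same degree and leading
   coefficient and q - 1 <> 0 in L, this forces P_f = P_g. *)

From HB Require Import structures.
From mathcomp Require Import all_boot all_order all_algebra all_field.
From mathcomp Require Import fingroup perm.
Set Implicit Arguments. Unset Strict Implicit. Unset Printing Implicit Defensive.
Import GRing.Theory.
Local Open Scope ring_scope.

Section PrincipalMinors.
Variable R : comPzRingType.

Lemma det_perm_conj n (s : 'S_n) (A : 'M[R]_n) :
  \det (row_perm s (col_perm s A)) = \det A.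
Proof.
by rewrite row_permE col_permE !det_mulmx !det_perm odd_permV mulrCA -expr2 sqrr_sign mulr1.
Qed.

Lemma det_mxsub_inj m n (g : 'I_m -> 'I_n) (A : 'M[R]_n) :
  m = n -> injective g -> \det (mxsub g g A) = \det A.
Proof.
move=> emn; subst m => g_inj.
have -> : mxsub g g A = row_perm (perm g_inj) (col_perm (perm g_inj) A).
  by apply/matrixP => i j; rewrite !mxE !permE.
exact: det_perm_conj.
Qed.

Lemma det_principal_submx n (A : 'M[R]_n) (J : {set 'I_n}) :
  \det (\matrix_(i, j) (if i \in J then A i j else (i == j)%:R)) =
  \det (principal_submx A J).
Proof.
set B := \matrix_(i, j) _.
(* List J first: conjugated by this reordering, B is block upper triangular
   with an identity lower-right block. *)
pose g (i : 'I_(#|J| + #|~: J|)) : 'I_n :=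
  match split i with inl j => enum_val j | inr j => enum_val j end.
have gl j : g (lshift _ j) = enum_val j by rewrite /g (unsplitK (inl _ j)).
have gr j : g (rshift _ j) = enum_val j by rewrite /g (unsplitK (inr _ j)).
have g_inj : injective g.
  move=> i1 i2; rewrite -[i1]splitK -[i2]splitK.
  case: (split i1) => j1; case: (split i2) => j2 /=; rewrite ?gl ?gr.
  - by move/enum_val_inj ->.
  - by move=> e; have := enum_valP j2; rewrite -e inE enum_valP.
  - by move=> e; have := enum_valP j1; rewrite e inE enum_valP.
  - by move/enum_val_inj ->.
rewrite -(det_mxsub_inj B _ g_inj); last by rewrite cardsC card_ord.
have dl0 : dlsubmx (mxsub g g B) = 0.
  apply/matrixP => i j; rewrite !mxE (inj_eq g_inj) eq_rlshift gr.
  by have := enum_valP i; rewrite inE => /negbTE ->.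
have dr1 : drsubmx (mxsub g g B) = 1%:M.
  apply/matrixP => i j; rewrite !mxE (inj_eq g_inj) eq_rshift gr.
  by have := enum_valP i; rewrite inE => /negbTE ->.
rewrite -[mxsub g g B]submxK dl0 dr1 det_ublock det1 mulr1.
by congr (\det _); apply/matrixP => i j; rewrite !mxE !gl enum_valP.
Qed.

Lemma det_add_diag n (A : 'M[R]_n) (d : 'I_n -> R) :
  \det (A + diag_mx (\row_i d i)) =
  \sum_(J : {set 'I_n}) \det (principal_submx A J) * \prod_(i in ~: J) d i.
Proof.
under eq_bigr => J _ do rewrite -det_principal_submx.
have expand_row (s : 'S_n) : \prod_i (A + diag_mx (\row_i d i)) i (s i) =
    \sum_(J : {set 'I_n}) \prod_i (if i \in J then A i (s i) else d i *+ (i == s i)).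
  by rewrite -bigA_distr; apply: eq_bigr => i _; rewrite !mxE.
rewrite [LHS]/determinant (eq_bigr _ (fun s _ => congr1 _ (expand_row s))).
under eq_bigr do rewrite mulr_sumr.
rewrite exchange_big /=; apply: eq_bigr => J _.
rewrite [\det _]/determinant mulr_suml; apply: eq_bigr => s _.
rewrite -mulrA; congr (_ * _).
rewrite (big_mkcond (fun i => i \in ~: J)) -big_split /=.
by apply: eq_bigr => i _; rewrite !mxE inE; case: (i \in J); rewrite ?mulr1 // mulr_natl.
Qed.

Lemma det_principal_submx0 n (A : 'M[R]_n) : \det (principal_submx A set0) = 1.
Proof. by move: (principal_submx A set0); rewrite cards0 => B; apply: det_mx00. Qed.

End PrincipalMinors.

Lemma poly_expr_inj (F : idomainType) (R S : {poly F}) (m : nat) :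
  size R = size S -> lead_coef R = lead_coef S -> m%:R != 0 :> F ->
  R ^+ m = S ^+ m -> R = S.
Proof.
move=> eq_size eq_lead m_neq0 eqRS.
have [R0|R0] := eqVneq R 0.
  by apply/eqP; rewrite R0 eq_sym -size_poly_eq0 -eq_size R0 size_poly0.
have S0 : S != 0 by rewrite -size_poly_eq0 -eq_size size_poly_eq0.
case: m m_neq0 eqRS => [|m]; first by rewrite eqxx.
move=> m_neq0 /eqP; rewrite -subr_eq0 subrXX mulf_eq0 subr_eq0 => /orP[/eqP //|].
set T := \sum_(i < m.+1) _ => /eqP T0.
set d := (size R).-1; set c := lead_coef R.
have term_size a b : size (R ^+ a * S ^+ b) = (d * (a + b)).+1.
  have Ra := expf_neq0 a R0; have Sb := expf_neq0 b S0.
  rewrite size_mul // (polySpred Ra) (polySpred Sb) !size_exp -eq_size /= -/d.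
  by rewrite addnS mulnDr.
have term_lead a b : lead_coef (R ^+ a * S ^+ b) = c ^+ (a + b).
  by rewrite lead_coefM !lead_coef_exp -eq_lead exprD.
have : T`_(d * m) = c ^+ m *+ m.+1.
  rewrite coef_sum -[m.+1 in RHS]card_ord -sumr_const; apply: eq_bigr => i _.
  have im : (m - i + i = m)%N by rewrite subnK // -ltnS.
  by rewrite -[in RHS]im -term_lead lead_coefE term_size im.
rewrite T0 coef0 => /esym/eqP; rewrite -mulr_natr mulf_eq0 (negbTE m_neq0) orbF.
by rewrite expf_eq0 lead_coef_eq0 (negbTE R0) andbF.
Qed.

Lemma qdigits_inj (q m : nat) (b c : nat -> bool) : (1 < q)%N ->
  (\sum_(i < m) b i * q ^ i = \sum_(i < m) c i * q ^ i)%N ->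
  forall i, (i < m)%N -> b i = c i.
Proof.
move=> q_gt1; elim: m b c => [//|m IH] b c.
have digit_lt (d : bool) : (d < q)%N by case: d; rewrite // ltnW.
have shift (d : nat -> bool) :
    (\sum_(i < m.+1) d i * q ^ i = d 0%N + (\sum_(i < m) d i.+1 * q ^ i) * q)%N.
  rewrite big_ord_recl muln1 big_distrl; congr (_ + _)%N.
  by apply: eq_bigr => i _; rewrite expnSr mulnA.
rewrite !shift => eq_bc.
have eq_bc0 : b 0%N = c 0%N.
  move: (congr1 (modn^~ q) eq_bc); rewrite /= !(addnC (nat_of_bool _)) !modnMDl.
  by rewrite !modn_small ?digit_lt //; case: (b 0%N); case: (c 0%N).
move: (congr1 (divn^~ q) eq_bc); rewrite /= !(addnC (nat_of_bool _)).
rewrite !divnMDl ?(ltnW q_gt1) // !divn_small ?digit_lt // !addn0.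
move=> /(IH (fun i => b i.+1) (fun i => c i.+1)) eq_bcS.
by case=> [|i] // /eq_bcS.
Qed.

Section ModularIndices.
Variable n : nat.

Lemma ord_subnK (j i : 'I_n) : ((ord_subn j i + i) %% n)%N = j.
Proof.
rewrite modnDml -addnA subnK ?(ltnW (ltn_ord i)) //.
by rewrite modnDr modn_small.
Qed.

Lemma ord_subn_eq (j i k : 'I_n) : ((k + i) %% n)%N = j -> ord_subn j i = k.
Proof.
rewrite -[in RHS](ord_subnK j i) => /eqP; rewrite eqn_modDr !modn_small //.
by move=> /eqP e; apply: val_inj.
Qed.

Lemma ord_subn_inj (i : 'I_n) : injective (fun j => ord_subn j i).
Proof. by move=> j1 j2 e; apply: val_inj; rewrite /= -(ord_subnK j1 i) e ord_subnK. Qed.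

Lemma ord_subnS (j i : 'I_n) : ord_subn (ordS j) (ordS i) = ord_subn j i.
Proof.
apply: ord_subn_eq; rewrite /= modnDm addnS -addnA subnK ?(ltnW (ltn_ord i)) //.
by rewrite -addSn modnDr.
Qed.

Lemma ord_subn_eq0 (j i : 'I_n) : (ord_subn j i == 0%N :> nat) = (j == i).
Proof.
apply/eqP/eqP => [e | ->]; last first.
  by rewrite /= subnKC ?modnn // ltnW.
by apply: val_inj; rewrite /= -(ord_subnK j i) e add0n modn_small.
Qed.

End ModularIndices.

Lemma expr_pred_fixed (F : fieldType) (u : F) (m : nat) :
  (1 < m)%N -> u ^+ m = u -> u ^+ m.-1 = (u != 0)%:R.
Proof.
move=> m_gt1 um; have [-> | u_neq0] := eqVneq u 0.
  by rewrite expr0n -subn1 subn_eq0 leqNgt m_gt1.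
by apply: (mulfI u_neq0); rewrite -exprS prednK ?(ltnW m_gt1) // um mulr1.
Qed.

Section Slopes.
Variable L : finFieldType.

Definition slopes (f : L -> L) : {set L} := [set f x / x | x in [set~ 0]].

Lemma slopesP (f : L -> L) (l : L) :
  reflect (exists2 x, x != 0 & f x = l * x) (l \in slopes f).
Proof.
apply: (iffP imsetP) => [[x] | [x x_neq0 fx]].
  by rewrite !inE => x_neq0 ->; exists x; rewrite ?divfK.
by exists x; rewrite ?inE // fx mulfK.
Qed.

Lemma proj_point_scale (x y : L) : x != 0 -> proj_point (x, y) = proj_point (1, y / x).
Proof.
move=> x_neq0; apply/setP => w; apply/imsetP/imsetP => [[c _ ->] | [c _ ->]] /=.
  by exists (c * x); rewrite // mulr1 -mulrA (mulrCA x) mulfV ?mulr1.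
by exists (c / x); rewrite // mulr1 divfK // mulrA mulrAC.
Qed.

Lemma proj_point1_inj : injective (fun l : L => proj_point (1, l)).
Proof.
move=> l1 l2 /= eq_l.
have : (1, l1) \in proj_point (1, l1) by apply/imsetP; exists 1; rewrite ?mul1r.
by rewrite eq_l => /imsetP [c _ [c1 ->]]; rewrite -[c]mulr1 -c1 mul1r.
Qed.

Lemma linset_graph (f : L -> L) : f 0 = 0 ->
  linset (graph_set f) = [set proj_point (1, l) | l in slopes f].
Proof.
move=> f0; apply/setP => P; apply/imsetP/imsetP => [[u] | [l /slopesP [x x_neq0 fx] ->]].
  move=> /setD1P [u_neq0 /imsetP [x _ u_def]] ->; subst u.
  have x_neq0 : x != 0 by apply: contra_neq u_neq0 => ->; rewrite f0.
  exists (f x / x); first by apply/slopesP; exists x; rewrite ?divfK.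
  by rewrite proj_point_scale.
exists (x, f x); last by rewrite [RHS]proj_point_scale // fx mulfK.
by rewrite !inE (imset_f (fun x => (x, f x))) // andbT; apply: contra x_neq0 => /eqP [->].
Qed.

End Slopes.

Section QPolynomials.
Variables (L : finFieldType) (q n : nat).
Hypotheses (q_gt1 : (1 < q)%N) (pchar_q : [pchar L].-nat q) (cardL : #|L| = (q ^ n)%N).

Definition qfrob (i : nat) (x : L) : L := x ^+ (q ^ i)%N.

Lemma pchar_qX i : [pchar L].-nat (q ^ i)%N.
Proof. by rewrite pnatX pchar_q. Qed.

Lemma qfrob_is_nmod_morphism i : nmod_morphism (qfrob i).
Proof.
split=> [|x y]; last exact: exprDn_pchar (pchar_qX i).
by rewrite /qfrob expr0n expn_eq0 -leqn0 leqNgt (ltnW q_gt1).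
Qed.

Lemma qfrob_is_monoid_morphism i : monoid_morphism (qfrob i).
Proof. by split=> [|x y]; rewrite /qfrob ?expr1n ?exprMn. Qed.

HB.instance Definition _ i := GRing.isNmodMorphism.Build L L (qfrob i)
  (qfrob_is_nmod_morphism i).
HB.instance Definition _ i := GRing.isMonoidMorphism.Build L L (qfrob i)
  (qfrob_is_monoid_morphism i).

Lemma qfrob_mod m (x : L) : x ^+ (q ^ m) = x ^+ (q ^ (m %% n)).
Proof.
rewrite {1}(divn_eq m n); elim: (m %/ n)%N => [|t IH]; first by rewrite mul0n.
by rewrite mulSn -addnA expnD exprM -cardL expf_card.
Qed.

Lemma n_gt0 : (0 < n)%N.
Proof.
by rewrite lt0n; apply: contraTneq (card_finNzRing_gt1 L); rewrite cardL => ->.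
Qed.

Lemma dickson_mulmx_frob (a : 'I_n -> L) (x : L) (i : 'I_n) :
  \sum_j dickson_mx q a i j * x ^+ (q ^ j) = qpoly_eval q a x ^+ (q ^ i).
Proof.
rewrite -[RHS]/(qfrob i _) rmorph_sum [RHS](reindex_inj (@ord_subn_inj n i)) /=.
apply: eq_bigr => j _; rewrite mxE rmorphM /= /qfrob -exprM -expnD.
by congr (_ * _); rewrite [RHS]qfrob_mod (ord_subnK j i).
Qed.

Lemma det_dickson_frob (a : 'I_n -> L) :
  \det (dickson_mx q a) ^+ q = \det (dickson_mx q a).
Proof.
pose s : 'S_n := perm (@ordS_inj n).
have -> : \det (dickson_mx q a) ^+ q = qfrob 1 (\det (dickson_mx q a)).
  by rewrite /qfrob expn1.
rewrite -det_map_mx -[RHS](det_perm_conj s); congr (\det _); apply/matrixP => i j.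
rewrite !mxE !permE ord_subnS /= /qfrob -exprM -expnSr.
exact: qfrob_mod.
Qed.

Lemma qpoly_evalB (a : 'I_n -> L) (x y : L) :
  qpoly_eval q a (x - y) = qpoly_eval q a x - qpoly_eval q a y.
Proof.
rewrite /qpoly_eval -sumrB; apply: eq_bigr => j _.
by rewrite -[_ ^+ _]/(qfrob j _) rmorphB mulrBr.
Qed.

Lemma qpoly_eval0 (a : 'I_n -> L) : qpoly_eval q a 0 = 0.
Proof. by rewrite -{1}(subrr 0) qpoly_evalB subrr. Qed.

Lemma qpoly_eval_eq0 (w : 'I_n -> L) :
  (forall x, qpoly_eval q w x = 0) -> forall i, w i = 0.
Proof.
move=> w0 i0; pose Q : {poly L} := \sum_(i < n) w i *: 'X^(q ^ i).
have Q_eq0 : Q = 0.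
  apply: (roots_geq_poly_eq0 (rs := enum L)) (enum_uniq L) _.
    apply/allP => x _; rewrite /root -(w0 x) /Q horner_sum.
    by apply/eqP/eq_bigr => i _; rewrite hornerZ hornerXn.
  rewrite -cardE cardL; apply: leq_trans (size_sum _ _ _) _; apply/bigmax_leqP => i _.
  apply: leq_trans (size_scale_leq _ _) _.
  by rewrite size_polyXn ltn_exp2l.
move: (congr1 (fun p : {poly L} => p`_(q ^ i0)) Q_eq0).
rewrite coef0 coef_sum (bigD1 i0) //= coefZ coefXn eqxx mulr1 big1 ?addr0 // => i i_neq0.
by rewrite coefZ coefXn eqn_exp2l // (inj_eq val_inj) eq_sym (negbTE i_neq0) mulr0.
Qed.

Lemma det_dickson_eq0 (a : 'I_n -> L) :
  (\det (dickson_mx q a) == 0) = [exists x, (x != 0) && (qpoly_eval q a x == 0)].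
Proof.
set D := dickson_mx q a; set f := qpoly_eval q a.
apply/idP/idP => [/det0P [w w_neq0 wD] | /existsP [x /andP [x_neq0 /eqP fx0]]].
  apply: contraR w_neq0 => /existsPn no_root.
  have f_inj : injective f.
    move=> x y fxy; apply/eqP; rewrite -subr_eq0; apply: contraR (no_root (x - y)).
    by move=> ->; rewrite /f qpoly_evalB -/f fxy subrr eqxx.
  have [g fK gK] := injF_bij f_inj.
  have w_eq0 : forall i, w 0 i = 0.
    apply: qpoly_eval_eq0 => y; rewrite -(gK y) /qpoly_eval.
    under eq_bigr => i _ do rewrite -dickson_mulmx_frob mulr_sumr.
    rewrite exchange_big big1 //= => j _.
    under eq_bigr do rewrite mulrA; rewrite -mulr_suml.
    by have := congr1 (fun v : 'rV_n => v 0 j) wD; rewrite !mxE => ->; rewrite mul0r.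
  by apply/eqP/rowP => i; rewrite w_eq0 mxE.
rewrite -det_tr; apply/det0P; exists (\row_j x ^+ (q ^ j)).
  apply: contra_neq x_neq0 => /rowP /(_ (Ordinal n_gt0)).
  by rewrite !mxE expn0 expr1.
apply/rowP => i; rewrite mxE [RHS]mxE.
transitivity (\sum_j dickson_mx q a i j * x ^+ (q ^ j)).
  by apply: eq_bigr => j _; rewrite !mxE mulrC.
by rewrite dickson_mulmx_frob -/f fx0 -[_ ^+ _]/(qfrob i 0) rmorph0.
Qed.

Definition qadic (T : {set 'I_n}) : nat := \sum_(i in T) q ^ i.

Lemma qadic_inj : injective qadic.
Proof.
pose digit (T : {set 'I_n}) (k : nat) := if insub k is Some i then i \in T else false.
have digitE T (i : 'I_n) : digit T i = (i \in T) by rewrite /digit valK.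
have qadicE T : qadic T = (\sum_(i < n) digit T i * q ^ i)%N.
  rewrite /qadic big_mkcond; apply: eq_bigr => i _.
  by rewrite digitE; case: (i \in T); rewrite ?mul1n ?mul0n.
move=> S T; rewrite !qadicE => /(qdigits_inj q_gt1) eq_ST.
by apply/setP => i; rewrite -!digitE eq_ST.
Qed.

Lemma qadic_leT T : (qadic T <= qadic [set: 'I_n])%N.
Proof.
rewrite /qadic [X in (_ <= X)%N]big_mkcond [X in (X <= _)%N]big_mkcond.
by apply: leq_sum => i _; rewrite in_setT; case: (i \in T).
Qed.

Lemma predn_exp_qadic : (q ^ n).-1 = (q.-1 * qadic [set: 'I_n])%N.
Proof. by rewrite predn_exp /qadic; congr (_ * _)%N; apply: eq_bigl => i; rewrite in_setT. Qed.

Definition qcoef_subX (a : 'I_n -> L) (l : L) : 'I_n -> L :=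
  fun j => a j - (if val j == 0%N then l else 0).

Lemma qpoly_eval_subX (a : 'I_n -> L) (l x : L) :
  qpoly_eval q (qcoef_subX a l) x = qpoly_eval q a x - l * x.
Proof.
rewrite /qpoly_eval /qcoef_subX; under eq_bigr => j _ do rewrite mulrBl.
rewrite sumrB; congr (_ - _).
rewrite (bigD1 (Ordinal n_gt0)) //= expn0 expr1 big1 ?addr0 // => j j_neq0.
rewrite (_ : (val j == 0%N) = false) ?mul0r //.
by apply: contraNF j_neq0 => /eqP j0; apply/eqP/val_inj.
Qed.

Definition dickson_charpoly (a : 'I_n -> L) : {poly L} :=
  \det (map_mx polyC (dickson_mx q a) + diag_mx (\row_i - 'X^(q ^ i))).

Lemma horner_dickson_charpoly (a : 'I_n -> L) (l : L) :
  (dickson_charpoly a).[l] = \det (dickson_mx q (qcoef_subX a l)).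
Proof.
rewrite /dickson_charpoly -horner_evalE -det_map_mx; congr (\det _).
apply/matrixP => i j; rewrite !mxE /= horner_evalE hornerD hornerC hornerMn hornerN hornerXn.
rewrite /qcoef_subX -[(_ - _) ^+ _]/(qfrob i _) rmorphB /= ord_subn_eq0.
have [-> | ji] := eqVneq j i; first by rewrite mulr1n.
by rewrite mulr0n addr0 rmorph0 subr0.
Qed.

Lemma root_dickson_charpoly (a : 'I_n -> L) (l : L) :
  root (dickson_charpoly a) l = (l \in slopes (qpoly_eval q a)).
Proof.
rewrite /root horner_dickson_charpoly det_dickson_eq0.
apply/existsP/slopesP => [[x /andP [x_neq0]] | [x x_neq0 fx]].
  by rewrite qpoly_eval_subX subr_eq0 => /eqP; exists x.
by exists x; rewrite qpoly_eval_subX x_neq0 fx subrr eqxx.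
Qed.

Lemma horner_dickson_charpoly_frob (a : 'I_n -> L) (l : L) :
  (dickson_charpoly a).[l] ^+ q = (dickson_charpoly a).[l].
Proof. by rewrite horner_dickson_charpoly det_dickson_frob. Qed.

Lemma dickson_charpoly_expand (a : 'I_n -> L) : dickson_charpoly a =
  \sum_(J : {set 'I_n})
    ((-1) ^+ #|~: J| * \det (principal_submx (dickson_mx q a) J)) *: 'X^(qadic (~: J)).
Proof.
rewrite /dickson_charpoly det_add_diag; apply: eq_bigr => J _.
rewrite /principal_submx -map_mxsub det_map_mx prodrN prodrXr -/(qadic (~: J)).
by rewrite -mul_polyC rmorphM /= rmorph_sign mulrCA mulrA.
Qed.

Lemma coef_dickson_charpoly (a : 'I_n -> L) (T : {set 'I_n}) :
  (dickson_charpoly a)`_(qadic T) =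
  (-1) ^+ #|T| * \det (principal_submx (dickson_mx q a) (~: T)).
Proof.
rewrite dickson_charpoly_expand coef_sum (bigD1 (~: T)) //= setCK coefZ coefXn eqxx mulr1.
rewrite big1 ?addr0 // => J J_neqCT; rewrite coefZ coefXn.
by rewrite (inj_eq qadic_inj) -(can2_eq setCK setCK) eq_sym (negbTE J_neqCT) mulr0.
Qed.

Lemma size_dickson_charpoly (a : 'I_n -> L) :
  size (dickson_charpoly a) = (qadic [set: 'I_n]).+1.
Proof.
have coefT : (dickson_charpoly a)`_(qadic [set: 'I_n]) = (-1) ^+ n.
  by rewrite coef_dickson_charpoly cardsT card_ord setCT det_principal_submx0 mulr1.
apply/anti_leq/andP; split.
  rewrite dickson_charpoly_expand; apply: leq_trans (size_sum _ _ _) _.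
  apply/bigmax_leqP => J _; apply: leq_trans (size_scale_leq _ _) _.
  by rewrite size_polyXn ltnS qadic_leT.
rewrite ltnNge; apply/negP => /leq_sizeP/(_ _ (leqnn _)).
by rewrite coefT => /eqP; rewrite signr_eq0.
Qed.

Lemma lead_coef_dickson_charpoly (a : 'I_n -> L) :
  lead_coef (dickson_charpoly a) = (-1) ^+ n.
Proof.
rewrite lead_coefE size_dickson_charpoly coef_dickson_charpoly.
by rewrite cardsT card_ord setCT det_principal_submx0 mulr1.
Qed.

Lemma natr_q : q%:R = 0 :> L.
Proof.
have pdiv_pchar : pdiv q \in [pchar L] by rewrite (pnatPpi pchar_q) // pi_pdiv.
by apply/eqP; rewrite -(dvdn_pcharf pdiv_pchar) pdiv_dvd.
Qed.

Lemma eq_dickson_charpoly (a b : 'I_n -> L) :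
  slopes (qpoly_eval q a) = slopes (qpoly_eval q b) ->
  dickson_charpoly a = dickson_charpoly b.
Proof.
(* Evaluations of dickson_charpoly lie in F_q, so its (q-1)-th power is the
   indicator of non-roots; these powers have degree q^n - 1 < #|L|. *)
move=> eq_slopes; have q_gt0 := ltnW q_gt1.
have horner_pow c l : (dickson_charpoly c ^+ q.-1).[l] = (~~ root (dickson_charpoly c) l)%:R.
  by rewrite horner_exp expr_pred_fixed ?horner_dickson_charpoly_frob.
have size_pow c : (size (dickson_charpoly c ^+ q.-1) <= #|L|)%N.
  rewrite cardL -[(q ^ n)%N]prednK ?expn_gt0 ?q_gt0 // predn_exp_qadic.
  rewrite -[qadic _]/(qadic [set: _]).+1.-1 -(size_dickson_charpoly c).
  by rewrite mulnC -size_exp leqSpred.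
apply: (@poly_expr_inj _ _ _ q.-1).
- by rewrite !size_dickson_charpoly.
- by rewrite !lead_coef_dickson_charpoly.
- have -> : q.-1%:R = - 1 :> L by apply/eqP; rewrite -addr_eq0 natr1 prednK // natr_q.
  by rewrite oppr_eq0 oner_eq0.
apply/eqP; rewrite -subr_eq0; apply/eqP.
apply: (roots_geq_poly_eq0 (rs := enum L)) (enum_uniq L) _.
  apply/allP => l _; rewrite /root hornerD hornerN !horner_pow.
  by rewrite !root_dickson_charpoly eq_slopes subrr.
rewrite -cardE; apply: leq_trans (size_polyD _ _) _.
by rewrite size_polyN geq_max !size_pow.
Qed.

Lemma dickson_charpoly_eq_minors (a b : 'I_n -> L) :
  dickson_charpoly a = dickson_charpoly b <->
  (forall alpha : {set 'I_n}, alpha != set0 ->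
     \det (principal_submx (dickson_mx q a) alpha) =
     \det (principal_submx (dickson_mx q b) alpha)).
Proof.
split=> [eq_ab alpha _ | eq_minors].
  move: (congr1 (fun P : {poly L} => P`_(qadic (~: alpha))) eq_ab).
  by rewrite /= !coef_dickson_charpoly !setCK => /(can_inj (signrMK _)).
rewrite !dickson_charpoly_expand; apply: eq_bigr => J _.
have [-> | J_neq0] := eqVneq J set0; first by rewrite !det_principal_submx0.
by rewrite eq_minors.
Qed.

Theorem linset_qpoly_eq_principal_minors (a b : 'I_n -> L) :
  linset (graph_set (qpoly_eval q a)) = linset (graph_set (qpoly_eval q b)) <->
  (forall alpha : {set 'I_n}, alpha != set0 ->
     \det (principal_submx (dickson_mx q a) alpha) =
     \det (principal_submx (dickson_mx q b) alpha)).
Proof.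
apply: iff_trans (dickson_charpoly_eq_minors a b).
rewrite !linset_graph ?qpoly_eval0 //.
split=> [/(imset_inj (@proj_point1_inj L)) | eq_ab]; first exact: eq_dickson_charpoly.
have -> // : slopes (qpoly_eval q a) = slopes (qpoly_eval q b).
by apply/setP => l; rewrite -!root_dickson_charpoly eq_ab.
Qed.

End QPolynomials.

Theorem mainTheorem6 (L : finFieldType) (p k q n : nat)
  (hp : prime p) (hk : (0 < k)%N) (hq : q = (p ^ k)%N) (hn : (2 <= n)%N)
  (hL : #|L| = (q ^ n)%N) (a b : 'I_n -> L) :
  linset (graph_set (qpoly_eval q a)) = linset (graph_set (qpoly_eval q b)) <->
  (forall alpha : {set 'I_n}, alpha != set0 ->
     \det (principal_submx (dickson_mx q a) alpha)
     = \det (principal_submx (dickson_mx q b) alpha)).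
Proof.
have pcharL : p \in [pchar L].
  by apply: (@card_finPcharP _ _ (k * n)); rewrite // hL hq expnM.
have q_gt1 : (1 < q)%N by rewrite hq -(expn0 p) ltn_exp2l ?prime_gt1.
have pchar_q : [pchar L].-nat q.
  by rewrite hq pnatX (eq_pnat _ (pcharf_eq pcharL)) pnat_id.
exact: linset_qpoly_eq_principal_minors.
Qed.
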